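(* The propagation detector $\mathit{PROP}$ is equivalent to the age detector $\mathit{AGE}$: $\mathit{PROP} \equiv \mathit{AGE}$.
   Context: Setting: peers communicate over reliable FIFO channels in a purely asynchronous system; a network split (at most one per computation, no reconnection) divides the network into two nonempty partitions, after which messages are delivered only within the sender's partition; messages sent before the split are delivered to all peers. Each mined block is broadcast immediately after mining. A detector is an algorithm whose actions may use information outside the model; its output variables are read by another algorithm $\mathit{ALG}$, and the actions of the two interleave fairly. For a block detector, each peer has, per block, an input variable $in$ and an output variable $out$, both initially $\bot$; $\mathit{ALG}$ writes $in$ and reads $out$. $\mathit{PROP}$: if a suffix of the computation has $in=b$ for a block $b$ mined by $\mathit{ALG}$, then $out$ is $\bot$ on a prefix and then permanently $\mathbf{true}$ if $b$ was received by all peers of the network, or permanently $\mathbf{false}$ if $b$ was delivered only within a partition. $\mathit{AGE}$: same, but the final permanent output is $old$ if $b$ was mined before the split and $new$ if mined after it. Detector $A$ is weaker than detector $B$ if there is an algorithm that takes every computation of $A$ and produces a computation of $B$. $A \equiv B$ if each is weaker than the other; $A \prec B$ (A strictly weaker than $B$) if $A$ is weaker than $B$ but not equivalent. *)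

From Stdlib Require Import Arith.

Set Implicit Arguments.

Section Model.
Variables (Peer Block : Type).

Record Comp := {
  (* [mined b = Some (p, t)]: block b was mined (and immediately
     broadcast) by peer p at time t; [None]: b is never mined. *)
  mined : Block -> option (Peer * nat);
  (* [split = Some (ts, side)]: the (unique) split happens at time ts
     and divides the peers into partitions {side = true} / {side = false};
     [None]: no split ever happens. *)
  split : option (nat * (Peer -> bool));
  (* [recv q b t]: peer q holds block b at time t (has mined or received it) *)
  recv : Peer -> Block -> nat -> bool
}.

Definition mined_before_split (c : Comp) (b : Block) : Prop :=
  exists p tm, mined c b = Some (p, tm) /\
    match split c with None => True | Some (ts, _) => tm < ts end.

Definition mined_after_split (c : Comp) (b : Block) : Prop :=
  exists p tm ts side, mined c b = Some (p, tm) /\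
    split c = Some (ts, side) /\ ts <= tm.

Definition admissible (c : Comp) : Prop :=
  (forall ts side, split c = Some (ts, side) ->
     (exists p, side p = true) /\ (exists p, side p = false)) /\
  (forall q b t t', t <= t' -> recv c q b t = true -> recv c q b t' = true) /\
  (forall q b t, recv c q b t = true ->
     exists p tm, mined c b = Some (p, tm) /\ tm <= t) /\
  (forall b p tm, mined c b = Some (p, tm) -> recv c p b tm = true) /\
  (forall b p tm, mined c b = Some (p, tm) ->
     match split c with None => True | Some (ts, _) => tm < ts end ->
     forall q, exists t, recv c q b t = true) /\
  (forall b p tm ts side, mined c b = Some (p, tm) ->
     split c = Some (ts, side) -> ts <= tm ->
     (forall q, side q = side p -> exists t, recv c q b t = true) /\
     (forall q t, recv c q b t = true -> side q = side p)).

Definition received_by_all (c : Comp) (b : Block) : Prop :=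
  forall q, exists t, recv c q b t = true.

Definition delivered_only_within_partition (c : Comp) (b : Block) : Prop :=
  exists p tm ts side, mined c b = Some (p, tm) /\ split c = Some (ts, side) /\
    forall q t, recv c q b t = true -> side q = side p.

(* Each peer has, per block (slot), an input variable [in] (written by ALG)
   and an output variable [out] (read by ALG); [None] encodes bottom. *)
Definition InHist := Peer -> Block -> nat -> option Block.
Definition OutHist (V : Type) := Peer -> Block -> nat -> option V.

Record Detector := {
  dval : Type;
  dspec : Comp -> InHist -> OutHist dval -> Prop
}.

Definition eventually_perm (V : Type) (o : nat -> option V) (v : V) : Prop :=
  exists t1, (forall t, t < t1 -> o t = None) /\
             (forall t, t1 <= t -> o t = Some v).

Definition suffix_in (c : Comp) (i : nat -> option Block) (b : Block) : Prop :=
  (exists t0, forall t, t0 <= t -> i t = Some b) /\ (exists p tm, mined c b = Some (p, tm)).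

Definition PROP : Detector := {|
  dval := bool;
  dspec := fun c inp out =>
    forall p k b, suffix_in c (inp p k) b ->
      (received_by_all c b -> eventually_perm (out p k) true) /\
      (delivered_only_within_partition c b -> eventually_perm (out p k) false)
|}.

Inductive age := old | new.

Definition AGE : Detector := {|
  dval := age;
  dspec := fun c inp out =>
    forall p k b, suffix_in c (inp p k) b ->
      (mined_before_split c b -> eventually_perm (out p k) old) /\
      (mined_after_split c b -> eventually_perm (out p k) new)
|}.

Definition same_local_view (V : Type) (p : Peer) (t : nat)
  (c1 : Comp) (i1 : InHist) (o1 : OutHist V)
  (c2 : Comp) (i2 : InHist) (o2 : OutHist V) : Prop :=
  forall s, s <= t -> forall b,
    i1 p b s = i2 p b s /\ o1 p b s = o2 p b s /\
    recv c1 p b s = recv c2 p b s /\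
    (mined c1 b = Some (p, s) <-> mined c2 b = Some (p, s)).

(* A transformation is implementable by an algorithm (within the model) if
   what it writes at peer p at time t depends only on p's local view up to t. *)
Definition local_in (G : Comp -> InHist -> InHist) : Prop :=
  forall p t c1 i1 c2 i2,
    same_local_view p t c1 i1 (fun _ _ _ => @None unit) c2 i2 (fun _ _ _ => None) ->
    forall b, G c1 i1 p b t = G c2 i2 p b t.

Definition local_out (VA VB : Type)
  (F : Comp -> InHist -> OutHist VA -> OutHist VB) : Prop :=
  forall p t c1 i1 o1 c2 i2 o2,
    same_local_view p t c1 i1 o1 c2 i2 o2 ->
    forall b, F c1 i1 o1 p b t = F c2 i2 o2 p b t.

(* A is weaker than B: an algorithm, using A (feeding A's inputs via G and
   reading A's outputs), produces from every computation of A a computation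
   of B (outputs F satisfying B's specification). *)
Definition weaker (A B : Detector) : Prop :=
  exists (G : Comp -> InHist -> InHist)
         (F : Comp -> InHist -> OutHist (dval A) -> OutHist (dval B)),
    local_in G /\ local_out F /\
    forall c, admissible c ->
      forall (inB : InHist) (outA : OutHist (dval A)),
        dspec A c (G c inB) outA -> dspec B c inB (F c inB outA).

Definition det_equiv (A B : Detector) : Prop := weaker A B /\ weaker B A.

End Model.

(* Both reductions are trivial as algorithms: the inputs are passed through
   unchanged, and every output value is translated pointwise
   (true <-> old, false <-> new).  Such a "relabeling" reduction is always
   implementable locally (lemma [weaker_by_relabel]), so the whole content is
   that, in admissible computations, the two classifications of a mined block
   coincide:
     received by all peers          <->  mined before the split,
     delivered only within a side   <->  mined after the split.
   Three of the four implications are immediate from the delivery axioms; the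
   remaining ones rest on a single fact ([received_by_all_not_confined]): since
   both partitions are nonempty, a block held by every peer cannot be confined
   to one partition. *)
From Stdlib Require Import Arith.

Set Implicit Arguments.

Section Reductions.
Variables (Peer Block : Type).

Definition relabel {V W : Type} (f : V -> W) (o : OutHist Peer Block V)
  : OutHist Peer Block W :=
  fun p k t => option_map f (o p k t).

Lemma eventually_perm_map {V W : Type} (f : V -> W) {o : nat -> option V} {v : V} :
  eventually_perm o v -> eventually_perm (fun t => option_map f (o t)) (f v).
Proof.
  intros [t1 [Hpre Hsuf]]. exists t1.
  split; intros t Ht; [rewrite Hpre | rewrite Hsuf]; auto.
Qed.

(* If A's specification, read through a relabeling f, yields B's
   specification on the same inputs, then A is weaker than B: the algorithm
   forwards its inputs to A and outputs f of A's current output, which only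
   uses the local view at the current instant. *)
Lemma weaker_by_relabel (A B : Detector Peer Block) (f : dval A -> dval B) :
  (forall c, admissible c -> forall inp (out : OutHist Peer Block (dval A)),
     dspec A c inp out -> dspec B c inp (relabel f out)) ->
  weaker A B.
Proof.
  intros Htrans.
  exists (fun _ i => i), (fun _ _ o => relabel f o).
  split; [| split].
  - intros p t c1 i1 c2 i2 Hview b. exact (proj1 (Hview t (le_n t) b)).
  - intros p t c1 i1 o1 c2 i2 o2 Hview b. unfold relabel.
    rewrite (proj1 (proj2 (Hview t (le_n t) b))). reflexivity.
  - exact Htrans.
Qed.

(* Since a split yields two nonempty partitions, no block held by every peer
   is confined to the partition of a single peer. *)
Lemma received_by_all_not_confined (c : Comp Peer Block) (b : Block)
    (ts : nat) (side : Peer -> bool) {p : Peer} :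
  admissible c -> split c = Some (ts, side) -> received_by_all c b ->
  ~ (forall q t, recv c q b t = true -> side q = side p).
Proof.
  intros (Hsides & _) Hs Hall Hconf.
  destruct (Hsides _ _ Hs) as [[q1 Hq1] [q2 Hq2]].
  destruct (Hall q1) as [t1 Ht1]. destruct (Hall q2) as [t2 Ht2].
  apply Hconf in Ht1. apply Hconf in Ht2. congruence.
Qed.

Lemma before_split_received_by_all (c : Comp Peer Block) (b : Block) :
  admissible c -> mined_before_split c b -> received_by_all c b.
Proof.
  intros (_ & _ & _ & _ & Hbefore & _) [p [tm [Hm Hs]]].
  exact (Hbefore _ _ _ Hm Hs).
Qed.

Lemma after_split_confined (c : Comp Peer Block) (b : Block) :
  admissible c -> mined_after_split c b -> delivered_only_within_partition c b.
Proof.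
  intros (_ & _ & _ & _ & _ & Hafter) [p [tm [ts [side [Hm [Hs Hle]]]]]].
  exists p, tm, ts, side. repeat split; auto.
  exact (proj2 (Hafter _ _ _ _ _ Hm Hs Hle)).
Qed.

(* A mined block received by all was mined before the split: had it been
   mined after, it would be confined to its miner's partition. *)
Lemma received_by_all_before_split (c : Comp Peer Block) (b : Block)
    (p : Peer) (tm : nat) :
  admissible c -> mined c b = Some (p, tm) -> received_by_all c b ->
  mined_before_split c b.
Proof.
  intros Hc Hm Hall. exists p, tm. split; [exact Hm |].
  destruct (split c) as [[ts side] |] eqn:Hs; [| exact I].
  destruct (Nat.lt_ge_cases tm ts) as [Hlt | Hge]; [exact Hlt | exfalso].
  assert (Hafter : mined_after_split c b) by (exists p, tm, ts, side; auto).
  destruct (after_split_confined Hc Hafter)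
    as [p' [tm' [ts' [side' [Hm' [Hs' Hconf]]]]]].
  rewrite Hs in Hs'. injection Hs' as <- <-.
  exact (received_by_all_not_confined Hc Hs Hall Hconf).
Qed.

(* A block confined to one partition was mined after the split: had it been
   mined before, every peer would receive it. *)
Lemma confined_after_split (c : Comp Peer Block) (b : Block) :
  admissible c -> delivered_only_within_partition c b -> mined_after_split c b.
Proof.
  intros Hc [p [tm [ts [side [Hm [Hs Hconf]]]]]].
  exists p, tm, ts, side. repeat split; auto.
  destruct (Nat.lt_ge_cases tm ts) as [Hlt | Hge]; [exfalso | exact Hge].
  assert (Hbefore : mined_before_split c b)
    by (exists p, tm; rewrite Hs; auto).
  exact (received_by_all_not_confined Hc Hs
           (before_split_received_by_all Hc Hbefore) Hconf).
Qed.

Definition age_of_prop (x : bool) : age := if x then old else new.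
Definition prop_of_age (x : age) : bool := match x with old => true | new => false end.

Lemma prop_weaker_age : weaker (PROP Peer Block) (AGE Peer Block).
Proof.
  apply (@weaker_by_relabel (PROP Peer Block) (AGE Peer Block) age_of_prop).
  intros c Hc inp out Hprop p k b Hsuf.
  destruct (Hprop p k b Hsuf) as [Hall Hconf]. split; intro Hage.
  - apply (eventually_perm_map age_of_prop (v := true)), Hall.
    exact (before_split_received_by_all Hc Hage).
  - apply (eventually_perm_map age_of_prop (v := false)), Hconf.
    exact (after_split_confined Hc Hage).
Qed.

Lemma age_weaker_prop : weaker (AGE Peer Block) (PROP Peer Block).
Proof.
  apply (@weaker_by_relabel (AGE Peer Block) (PROP Peer Block) prop_of_age).
  intros c Hc inp out Hage p k b Hsuf.
  destruct (Hage p k b Hsuf) as [Hold Hnew]. split; intro Hprop.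
  - apply (eventually_perm_map prop_of_age (v := old)), Hold.
    destruct Hsuf as [_ [miner [tm Hm]]].
    exact (received_by_all_before_split Hc Hm Hprop).
  - apply (eventually_perm_map prop_of_age (v := new)), Hnew.
    exact (confined_after_split Hc Hprop).
Qed.

End Reductions.

Theorem lemma2 (Peer Block : Type) :
  det_equiv (PROP Peer Block) (AGE Peer Block).
Proof.
  split; [exact (prop_weaker_age Peer Block) | exact (age_weaker_prop Peer Block)].
Qed.
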